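(* Let $\lambda>0$ and $\Delta\ge1$, and define $y_1=1$ and $y_k=(1+\lambda\Delta y_{k-1})^{-1}$ for $k\geq 2$. Then $\lim_{k\to \infty} y_k= \frac{2}{1+\sqrt{1+4\lambda\Delta}}$. Moreover, defining $\underline{h}(\epsilon,\Delta) = \sup\{h:\ |y_{h}-y_{h-1}|\geq \epsilon\}$, we have $$\lim_{\Delta\to \infty}\frac{1}{\sqrt{\Delta}}\lim_{\epsilon\to 0}\frac{\underline{h}(\epsilon,\Delta)}{\log(1/\epsilon)} = \sqrt{\lambda}.$$ *)

From Stdlib Require Import Reals Lra Lia.
From Coquelicot Require Import Coquelicot.
Open Scope R_scope.

(* The sequence y_k of the paper: y_1 = 1, y_k = (1 + lam*D*y_{k-1})^{-1}, k >= 2.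
   Index 0 is junk (set to 1) and never used by the statement. *)
Fixpoint yseq (lam D : R) (k : nat) : R :=
  match k with
  | O => 1
  | S k' => match k' with
            | O => 1
            | S _ => / (1 + lam * D * yseq lam D k')
            end
  end.

(* underline{h}(eps, D) = sup { h >= 2 : |y_h - y_{h-1}| >= eps }, as a real
   (the set is a finite set of naturals for eps > 0; [real] sends the
   degenerate values -oo / +oo to 0, irrelevant for the limits eps -> 0+). *)
Definition hlow (lam D eps : R) : R :=
  real (Lub_Rbar (fun x : R => exists h : nat,
          x = INR h /\ (2 <= h)%nat /\
          Rabs (yseq lam D h - yseq lam D (h - 1)) >= eps)).

From Stdlib Require Import Reals Lra Lia Psatz.
From Coquelicot Require Import Coquelicot.
Open Scope R_scope.

(* Write a = lam * Delta and y* = 2 / (1 + sqrt (1 + 4 a)), the positive root of a y^2 + y = 1.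
   The second iterate of y |-> 1 / (1 + a y) contracts towards y* by the factor
   (a y* )^2 / (1 + a) < 1, which gives the first limit.  Consecutive differences satisfy
   y_{h+1} - y_h = - a y_{h+1} y_h (y_h - y_{h-1}), so by Cesaro -ln |y_h - y_{h-1}| ~ h ell
   with ell = -ln (a y*^2) = -ln (1 - y* ); inverting, h(eps) ~ ln (1/eps) / ell.
   Finally ln x <= x - 1 traps 1 / ell between 1 / y* - 1 and 1 / y* = (1 + sqrt (1 + 4 a)) / 2,
   and both bounds are sqrt (lam Delta) + O(1). *)

Lemma Lub_Rbar_real_bounds (E : R -> Prop) (x0 b : R) :
  E x0 -> (forall x, E x -> x <= b) ->
  (forall x, E x -> x <= real (Lub_Rbar E)) /\ real (Lub_Rbar E) <= b.
Proof.
  intros Hx0 Hb. destruct (Lub_Rbar_correct E) as [Hub Hlub].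
  specialize (Hlub (Finite b) Hb).
  destruct (Lub_Rbar E) as [r| |]; simpl in *.
  - split; [exact Hub | exact Hlub].
  - destruct Hlub.
  - destruct (Hub x0 Hx0).
Qed.

Lemma is_lim_seq_div_INR_of_increments (u : nat -> R) (l : R) :
  is_lim_seq (fun n => u (S n) - u n) l -> is_lim_seq (fun n => u n / INR n) l.
Proof.
  intros Hinc. apply is_lim_seq_Reals, Cesaro_1, is_lim_seq_Reals in Hinc.
  assert (Hvanish : is_lim_seq (fun n => u O * / INR n) 0).
  { replace (Finite 0) with (Rbar_mult (u O) (Rbar_inv p_infty))
      by (simpl; f_equal; ring).
    apply is_lim_seq_scal_l, is_lim_seq_inv; [apply is_lim_seq_INR | discriminate]. }
  rewrite <- (Rplus_0_r l).
  eapply is_lim_seq_ext_loc; [| exact (is_lim_seq_plus' _ _ _ _ Hinc Hvanish)].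
  exists 1%nat. intros [|n] Hn; [lia |]. simpl pred.
  assert (Htelescope :
    sum_f_R0 (fun k => u (S k) - u k) n = u (S n) - u O).
  { clear Hn. induction n as [|n IH]; simpl; [ring | rewrite IH; ring]. }
  rewrite Htelescope. field. apply not_0_INR. discriminate.
Qed.

Lemma filterlim_div2_eventually : filterlim Nat.div2 eventually eventually.
Proof.
  intros P [N HN]. exists (2 * N)%nat. intros n Hn. apply HN.
  rewrite Nat.div2_div. apply Nat.div_le_lower_bound; lia.
Qed.

Definition level_sup (u : nat -> R) (k : nat) (t : R) : R :=
  real (Lub_Rbar (fun x => exists n, x = INR (n + k) /\ u n <= t)).

Lemma is_lim_seq_div_INR_linear_bounds (u : nat -> R) (l d : R) :
  0 < d -> is_lim_seq (fun n => u n / INR n) l ->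
  exists N, forall n, (N <= n)%nat -> (l - d) * INR n < u n < (l + d) * INR n.
Proof.
  intros Hd Hu. apply is_lim_seq_Reals in Hu.
  destruct (Hu d Hd) as [N HN]. exists (max N 1). intros n Hn.
  assert (Hn1 : 0 < INR n) by (apply lt_0_INR; lia).
  specialize (HN n ltac:(lia)). unfold Rdist in HN.
  apply Rabs_def2 in HN.
  replace (u n) with (u n / INR n * INR n) by (field; lra).
  split; nra.
Qed.

Lemma level_sup_bounds (u : nat -> R) (k : nat) (l d : R) :
  0 < d < l -> is_lim_seq (fun n => u n / INR n) l ->
  exists M, forall t, M < t ->
    t / (l + d) - 1 <= level_sup u k t <= t / (l - d) + INR k.
Proof.
  intros Hd Hu.
  destruct (is_lim_seq_div_INR_linear_bounds u l d (proj1 Hd) Hu) as [N HN].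
  exists ((l + d) * INR N). intros t Ht.
  pose proof (pos_INR N) as HN0.
  assert (HNt : INR N <= t / (l + d)) by (apply Rle_div_r; lra).
  assert (Hsmaller : t / (l + d) <= t / (l - d)).
  { apply Rmult_le_compat_l; [nra | apply Rinv_le_contravar; lra]. }
  destruct (nfloor_ex (t / (l + d)) ltac:(lra)) as [n [Hn1 Hn2]].
  assert (HnN : (N <= n)%nat).
  { assert (HNSn : INR N < INR (S n)) by (rewrite S_INR; lra).
    apply INR_lt in HNSn. lia. }
  assert (Hmem : exists m, INR (n + k) = INR (m + k) /\ u m <= t).
  { exists n. split; [reflexivity |].
    destruct (HN n HnN) as [_ Hun].
    apply Rle_div_r in Hn1; lra. }
  assert (Hub : forall x, (exists m, x = INR (m + k) /\ u m <= t) ->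
                         x <= t / (l - d) + INR k).
  { intros x [m [-> Hm]]. rewrite plus_INR.
    enough (INR m <= t / (l - d)) by lra.
    destruct (Nat.le_gt_cases N m) as [HmN | HmN].
    - apply Rle_div_r; [lra |]. specialize (HN m HmN). lra.
    - apply lt_INR in HmN. lra. }
  destruct (Lub_Rbar_real_bounds _ _ _ Hmem Hub) as [Hlo Hhi].
  specialize (Hlo _ Hmem). rewrite plus_INR in Hlo.
  pose proof (pos_INR k). unfold level_sup. lra.
Qed.

Lemma is_lim_level_sup_div (u : nat -> R) (k : nat) (l : R) :
  0 < l -> is_lim_seq (fun n => u n / INR n) l ->
  filterlim (fun t => level_sup u k t / t) (Rbar_locally p_infty) (locally (/ l)).
Proof.
  intros Hl Hu. apply filterlim_locally. intros eta.
  assert (Hinv : filterlim Rinv (locally l) (locally (/ l))).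
  { apply (filterlim_Rbar_inv (Finite l)). intros E; injection E; lra. }
  destruct (proj1 (filterlim_locally _ _) Hinv (pos_div_2 eta)) as [d0 Hd0].
  pose proof (cond_pos d0) as Hd0pos.
  set (d := Rmin (d0 / 2) (l / 2)).
  assert (Hd_d0 : d <= d0 / 2) by apply Rmin_l.
  assert (Hd_l : d <= l / 2) by apply Rmin_r.
  assert (Hd : 0 < d < l) by (split; [apply Rmin_pos |]; lra).
  assert (Hclose : forall x, Rabs (x - l) <= d -> Rabs (/ x - / l) < eta / 2).
  { intros x Hx. apply (Hd0 x). change (Rabs (x - l) < d0). lra. }
  assert (Hplus : Rabs (/ (l + d) - / l) < eta / 2).
  { apply Hclose. replace (l + d - l) with d by ring. rewrite Rabs_pos_eq; lra. }
  assert (Hminus : Rabs (/ (l - d) - / l) < eta / 2).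
  { apply Hclose. replace (l - d - l) with (- d) by ring.
    rewrite Rabs_Ropp, Rabs_pos_eq; lra. }
  apply Rabs_def2 in Hplus. apply Rabs_def2 in Hminus.
  destruct (level_sup_bounds u k l d Hd Hu) as [M HM].
  pose proof (cond_pos eta) as Heta. pose proof (pos_INR k) as Hk.
  exists (Rmax M (2 * (INR k + 1) / eta)). intros t Ht.
  specialize (HM t (Rle_lt_trans _ _ _ (Rmax_l _ _) Ht)).
  assert (Htail : 2 * (INR k + 1) / eta < t) by exact (Rle_lt_trans _ _ _ (Rmax_r _ _) Ht).
  assert (Ht0 : 0 < t).
  { eapply Rle_lt_trans; [| exact Htail]. apply Rlt_le, Rdiv_lt_0_compat; lra. }
  assert (Hsmall : (INR k + 1) / t < eta / 2).
  { apply Rlt_div_l; [lra |]. apply Rlt_div_l in Htail; lra. }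
  assert (Hk_t : 0 <= INR k / t) by (apply Rdiv_le_0_compat; lra).
  assert (Hsplit : (INR k + 1) / t = INR k / t + / t) by (field; lra).
  set (h := level_sup u k t) in *.
  assert (Hlow : / (l + d) - / t <= h / t).
  { replace (/ (l + d) - / t) with ((t / (l + d) - 1) / t) by (field; lra).
    apply Rmult_le_compat_r; [apply Rlt_le, Rinv_0_lt_compat |]; lra. }
  assert (Hhigh : h / t <= / (l - d) + INR k / t).
  { replace (/ (l - d) + INR k / t) with ((t / (l - d) + INR k) / t) by (field; lra).
    apply Rmult_le_compat_r; [apply Rlt_le, Rinv_0_lt_compat |]; lra. }
  pose proof (Rinv_0_lt_compat t Ht0).
  change (Rabs (h / t - / l) < eta). apply Rabs_def1; lra.
Qed.

Definition yfix (a : R) : R := 2 / (1 + sqrt (1 + 4 * a)).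

Lemma yfix_bounds (a : R) : 0 < a -> 0 < yfix a < 1.
Proof.
  intros Ha. unfold yfix.
  assert (Hs : 1 < sqrt (1 + 4 * a)).
  { rewrite <- sqrt_1 at 1. apply sqrt_lt_1_alt; lra. }
  split; [apply Rdiv_lt_0_compat; lra |].
  apply Rlt_div_l; lra.
Qed.

Lemma yfix_root (a : R) : 0 <= a -> a * yfix a ^ 2 + yfix a = 1.
Proof.
  intros Ha. unfold yfix.
  assert (Hss : sqrt (1 + 4 * a) * sqrt (1 + 4 * a) = 1 + 4 * a)
    by (apply sqrt_sqrt; lra).
  pose proof (sqrt_pos (1 + 4 * a)).
  set (s := sqrt (1 + 4 * a)) in *.
  replace a with ((s * s - 1) / 4) by lra. field. lra.
Qed.

Definition decay_rate (a : R) : R := - ln (1 - yfix a).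

Lemma ln_le_sub_1 (x : R) : 0 < x -> ln x <= x - 1.
Proof.
  intros Hx. rewrite <- (ln_exp (x - 1)). apply ln_le; [exact Hx |].
  pose proof (exp_ineq1_le (x - 1)). lra.
Qed.

Lemma inv_decay_rate_bounds (a : R) :
  0 < a -> / yfix a - 1 <= / decay_rate a <= / yfix a.
Proof.
  intros Ha. destruct (yfix_bounds a Ha) as [Hy0 Hy1]. unfold decay_rate.
  assert (Hlow : yfix a <= - ln (1 - yfix a))
    by (pose proof (ln_le_sub_1 (1 - yfix a)); lra).
  assert (Hhigh : - ln (1 - yfix a) <= yfix a / (1 - yfix a)).
  { rewrite <- ln_Rinv by lra.
    replace (yfix a / (1 - yfix a)) with (/ (1 - yfix a) - 1) by (field; lra).
    apply ln_le_sub_1, Rinv_0_lt_compat. lra. }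
  split.
  - replace (/ yfix a - 1) with (/ (yfix a / (1 - yfix a))) by (field; lra).
    apply Rinv_le_contravar; [lra | exact Hhigh].
  - apply Rinv_le_contravar; [lra | exact Hlow].
Qed.

Lemma decay_rate_gt0 (a : R) : 0 < a -> 0 < decay_rate a.
Proof.
  intros Ha. destruct (yfix_bounds a Ha). unfold decay_rate.
  assert (Hlt : ln (1 - yfix a) < ln 1) by (apply ln_increasing; lra).
  rewrite ln_1 in Hlt. lra.
Qed.

Lemma neg_ln_le_ln_inv_iff (x e : R) : 0 < x -> 0 < e -> - ln x <= ln (/ e) <-> e <= x.
Proof.
  intros Hx He. rewrite ln_Rinv by exact He. split; intros H.
  - apply Rnot_lt_le. intros Hlt. pose proof (ln_increasing x e Hx Hlt). lra.
  - pose proof (ln_le e x He H). lra.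
Qed.

Section Recurrence.

Variables lam D : R.
Hypothesis Ha : 0 < lam * D.

Local Notation a := (lam * D).
Local Notation y := (yseq lam D).

Lemma yseq_SS (n : nat) : y (S (S n)) = / (1 + a * y (S n)).
Proof. reflexivity. Qed.

Lemma yseq_bounds (n : nat) : 0 < y n <= 1.
Proof.
  induction n as [|[|n] IH]; try (simpl; lra).
  rewrite yseq_SS. split.
  - apply Rinv_0_lt_compat. nra.
  - rewrite <- Rinv_1. apply Rinv_le_contravar; nra.
Qed.

Lemma yseq_SS_sub_yfix (n : nat) :
  y (S (S n)) - yfix a = - (a * yfix a) * (y (S n) - yfix a) / (1 + a * y (S n)).
Proof.
  pose proof (yfix_root a ltac:(lra)) as Hroot.
  pose proof (yseq_bounds (S n)) as Hy.
  rewrite yseq_SS. field_simplify_eq; nra.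
Qed.

Lemma yseq_SSS_sub_yfix (n : nat) :
  y (S (S (S n))) - yfix a =
  (a * yfix a) ^ 2 * (y (S n) - yfix a) / (1 + a + a * y (S n)).
Proof.
  pose proof (yseq_bounds (S n)) as Hy.
  rewrite yseq_SS_sub_yfix, yseq_SS_sub_yfix, (yseq_SS n).
  field. nra.
Qed.

Let two_step_ratio := (a * yfix a) ^ 2 / (1 + a).

Lemma two_step_ratio_bounds : 0 <= two_step_ratio < 1.
Proof.
  pose proof (yfix_root a ltac:(lra)) as Hroot.
  pose proof (yfix_bounds a Ha) as Hfix.
  unfold two_step_ratio. split.
  - apply Rmult_le_pos; [nra | apply Rlt_le, Rinv_0_lt_compat; lra].
  - apply Rlt_div_l; nra.
Qed.

Lemma yseq_two_step_contraction (n : nat) :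
  Rabs (y (S (S (S n))) - yfix a) <= two_step_ratio * Rabs (y (S n) - yfix a).
Proof.
  pose proof (yseq_bounds (S n)) as Hy.
  rewrite yseq_SSS_sub_yfix. unfold Rdiv.
  rewrite Rmult_comm, <- Rmult_assoc, Rabs_mult, Rabs_pos_eq.
  2:{ apply Rmult_le_pos; [apply Rlt_le, Rinv_0_lt_compat; nra | apply pow2_ge_0]. }
  apply Rmult_le_compat_r; [apply Rabs_pos |].
  unfold two_step_ratio. rewrite Rmult_comm. apply Rmult_le_compat_l; [apply pow2_ge_0 |].
  apply Rinv_le_contravar; nra.
Qed.

Lemma yseq_sub_yfix_le (n : nat) : Rabs (y (S n) - yfix a) <= two_step_ratio ^ Nat.div2 n.
Proof.
  pose proof (yfix_bounds a Ha) as Hfix.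
  pose proof two_step_ratio_bounds as Hrho.
  enough (Hpair : Rabs (y (S n) - yfix a) <= two_step_ratio ^ Nat.div2 n /\
                  Rabs (y (S (S n)) - yfix a) <= two_step_ratio ^ Nat.div2 (S n))
    by exact (proj1 Hpair).
  induction n as [|n [IH1 IH2]].
  - simpl pow. pose proof (yseq_bounds 1). pose proof (yseq_bounds 2).
    split; apply Rabs_le; lra.
  - split; [exact IH2 |].
    change (Nat.div2 (S (S n))) with (S (Nat.div2 n)). rewrite <- tech_pow_Rmult.
    eapply Rle_trans; [apply yseq_two_step_contraction |].
    apply Rmult_le_compat_l; lra.
Qed.

Lemma is_lim_yseq : is_lim_seq y (yfix a).
Proof.
  pose proof two_step_ratio_bounds as Hrho.
  assert (Hgap : is_lim_seq (fun n => y (S n) - yfix a) 0).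
  { apply is_lim_seq_abs_0.
    apply is_lim_seq_le_le with (fun _ => 0) (fun n => two_step_ratio ^ Nat.div2 n).
    - intros n. split; [apply Rabs_pos | apply yseq_sub_yfix_le].
    - apply is_lim_seq_const.
    - apply (filterlim_comp _ _ _ Nat.div2 (pow two_step_ratio) _ eventually).
      + exact filterlim_div2_eventually.
      + apply is_lim_seq_geom. rewrite Rabs_pos_eq; lra. }
  apply is_lim_seq_incr_1.
  apply is_lim_seq_ext with (fun n => (y (S n) - yfix a) + yfix a); [intros; ring |].
  replace (Finite (yfix a)) with (Rbar_plus 0 (yfix a)) by (simpl; f_equal; ring).
  apply is_lim_seq_plus'; [exact Hgap | apply is_lim_seq_const].
Qed.

Definition ydiff (n : nat) : R := y (S (S n)) - y (S n).

Lemma ydiff_S (n : nat) :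
  ydiff (S n) = - (a * y (S (S (S n))) * y (S (S n))) * ydiff n.
Proof.
  pose proof (yseq_bounds (S n)) as Hy.
  unfold ydiff. rewrite !yseq_SS.
  assert (Hden : 0 < 1 + a * / (1 + a * y (S n))).
  { pose proof (Rinv_0_lt_compat (1 + a * y (S n)) ltac:(nra)). nra. }
  field. split; nra.
Qed.

Lemma ydiff_neq0 (n : nat) : ydiff n <> 0.
Proof.
  induction n as [|n IH].
  - unfold ydiff. rewrite yseq_SS. change (y 1) with 1.
    pose proof (Rinv_lt_contravar 1 (1 + a * 1) ltac:(lra) ltac:(lra)) as Hlt.
    rewrite Rinv_1 in Hlt. lra.
  - rewrite ydiff_S. apply Rmult_integral_contrapositive_currified; [| exact IH].
    pose proof (yseq_bounds (S (S (S n)))). pose proof (yseq_bounds (S (S n))).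
    enough (0 < a * y (S (S (S n))) * y (S (S n))) by lra.
    apply Rmult_lt_0_compat; [apply Rmult_lt_0_compat |]; lra.
Qed.

Definition nlog_ydiff (n : nat) : R := - ln (Rabs (ydiff n)).

Lemma nlog_ydiff_S_sub (n : nat) :
  nlog_ydiff (S n) - nlog_ydiff n = - ln (a * y (S (S (S n))) * y (S (S n))).
Proof.
  pose proof (yseq_bounds (S (S (S n)))). pose proof (yseq_bounds (S (S n))).
  assert (Hratio : 0 < a * y (S (S (S n))) * y (S (S n))).
  { apply Rmult_lt_0_compat; [apply Rmult_lt_0_compat |]; lra. }
  unfold nlog_ydiff. rewrite ydiff_S, Rabs_mult, Rabs_Ropp, (Rabs_pos_eq _ (Rlt_le _ _ Hratio)).
  rewrite ln_mult; [ring | exact Hratio | apply Rabs_pos_lt, ydiff_neq0].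
Qed.

Lemma is_lim_nlog_ydiff_div : is_lim_seq (fun n => nlog_ydiff n / INR n) (decay_rate a).
Proof.
  apply is_lim_seq_div_INR_of_increments.
  apply is_lim_seq_ext with (fun n => - ln (a * y (S (S (S n))) * y (S (S n)))).
  { intros n. symmetry. apply nlog_ydiff_S_sub. }
  pose proof (yfix_bounds a Ha) as Hfix.
  unfold decay_rate.
  replace (1 - yfix a) with (a * yfix a * yfix a) by (pose proof (yfix_root a); nra).
  apply (is_lim_seq_opp _ (Finite (ln (a * yfix a * yfix a)))).
  apply (filterlim_comp _ _ _ _ ln _ (locally (a * yfix a * yfix a))).
  - pose proof (proj1 (is_lim_seq_incr_1 _ _) is_lim_yseq) as Hy1.
    pose proof (proj1 (is_lim_seq_incr_1 _ _) Hy1) as Hy2.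
    pose proof (proj1 (is_lim_seq_incr_1 _ _) Hy2) as Hy3.
    apply (is_lim_seq_mult' _ _ (a * yfix a)); [| exact Hy2].
    apply (is_lim_seq_scal_l _ a (yfix a)). exact Hy3.
  - apply continuous_ln. apply Rmult_lt_0_compat; [apply Rmult_lt_0_compat |]; lra.
Qed.

Lemma hlow_eq_level_sup (eps : R) :
  0 < eps -> hlow lam D eps = level_sup nlog_ydiff 2 (ln (/ eps)).
Proof.
  intros Heps. unfold hlow, level_sup. f_equal. apply Lub_Rbar_eqset.
  assert (Hlevel : forall n, Rabs (ydiff n) >= eps <-> nlog_ydiff n <= ln (/ eps)).
  { intros n. unfold nlog_ydiff.
    rewrite (neg_ln_le_ln_inv_iff _ _ (Rabs_pos_lt _ (ydiff_neq0 n)) Heps).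
    split; [apply Rge_le | apply Rle_ge]. }
  intros x. split.
  - intros [h [-> [Hh Hdiff]]]. exists (h - 2)%nat. split; [f_equal; lia |].
    apply Hlevel. unfold ydiff.
    replace (S (S (h - 2))) with h by lia. replace (S (h - 2)) with (h - 1)%nat by lia.
    exact Hdiff.
  - intros [n [-> Hn]]. exists (n + 2)%nat. split; [reflexivity | split; [lia |]].
    apply Hlevel in Hn. unfold ydiff in Hn.
    replace (n + 2)%nat with (S (S n)) by lia. replace (S (S n) - 1)%nat with (S n) by lia.
    exact Hn.
Qed.

Lemma is_lim_hlow_div_ln :
  filterlim (fun eps => hlow lam D eps / ln (/ eps)) (at_right 0) (locally (/ decay_rate a)).
Proof.
  apply filterlim_ext_loc with
    (fun eps => level_sup nlog_ydiff 2 (ln (/ eps)) / ln (/ eps)).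
  { exists (mkposreal 1 Rlt_0_1). intros eps _ Heps.
    rewrite hlow_eq_level_sup by exact Heps. reflexivity. }
  apply (filterlim_comp _ _ _ (fun eps => ln (/ eps)) (fun t => level_sup nlog_ydiff 2 t / t)
           _ (Rbar_locally p_infty)).
  - exact (filterlim_comp _ _ _ _ _ _ _ _ filterlim_Rinv_0_right is_lim_ln_p).
  - apply is_lim_level_sup_div; [apply decay_rate_gt0, Ha | apply is_lim_nlog_ydiff_div].
Qed.

End Recurrence.

Lemma inv_sqrt_mul_inv_yfix (lam x : R) :
  0 < x -> / sqrt x * / yfix (lam * x) = (sqrt (/ x + 4 * lam) + sqrt (/ x)) / 2.
Proof.
  intros Hx. unfold yfix.
  replace (/ x + 4 * lam) with ((1 + 4 * (lam * x)) / x) by (field; lra).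
  rewrite sqrt_div_alt, sqrt_inv by exact Hx.
  pose proof (sqrt_lt_R0 x Hx). pose proof (sqrt_pos (1 + 4 * (lam * x))).
  field. lra.
Qed.

Lemma is_lim_seq_sqrt (u : nat -> R) (l : R) :
  is_lim_seq u l -> is_lim_seq (fun n => sqrt (u n)) (sqrt l).
Proof. intros Hu. exact (filterlim_comp _ _ _ _ _ _ _ _ Hu (continuous_sqrt l)). Qed.

(* With [v = 1 / Delta], the bounds on [/ decay_rate] become [(sqrt (v + 4 lam) -+ sqrt v) / 2]. *)
Lemma is_lim_inv_sqrt_mul_inv_decay_rate (lam : R) :
  0 < lam ->
  is_lim_seq (fun n => / sqrt (INR n) * / decay_rate (lam * INR n)) (sqrt lam).
Proof.
  intros Hlam.
  assert (Hv : is_lim_seq (fun n => / INR n) 0).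
  { apply (is_lim_seq_inv _ p_infty); [exact is_lim_seq_INR | discriminate]. }
  assert (Hr : is_lim_seq (fun n => sqrt (/ INR n)) 0).
  { rewrite <- sqrt_0. exact (is_lim_seq_sqrt _ _ Hv). }
  assert (Hs : is_lim_seq (fun n => sqrt (/ INR n + 4 * lam)) (2 * sqrt lam)).
  { replace (2 * sqrt lam) with (sqrt (0 + 4 * lam)).
    - apply is_lim_seq_sqrt, (is_lim_seq_plus' _ _ 0); [exact Hv | apply is_lim_seq_const].
    - rewrite Rplus_0_l, sqrt_mult_alt by lra.
      replace 4 with (2 * 2) by ring. rewrite sqrt_square by lra. reflexivity. }
  apply is_lim_seq_le_le_loc with
    (fun n => (sqrt (/ INR n + 4 * lam) - sqrt (/ INR n)) / 2)
    (fun n => (sqrt (/ INR n + 4 * lam) + sqrt (/ INR n)) / 2).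
  - exists 1%nat. intros n Hn.
    assert (Hn0 : 0 < INR n) by (apply lt_0_INR; lia).
    assert (Ha : 0 < lam * INR n) by nra.
    destruct (inv_decay_rate_bounds _ Ha) as [Hlow Hhigh].
    pose proof (Rinv_0_lt_compat _ (sqrt_lt_R0 _ Hn0)) as Hr0.
    rewrite <- (inv_sqrt_mul_inv_yfix lam (INR n) Hn0).
    replace ((sqrt (/ INR n + 4 * lam) - sqrt (/ INR n)) / 2)
      with (/ sqrt (INR n) * (/ yfix (lam * INR n) - 1))
      by (rewrite Rmult_minus_distr_l, inv_sqrt_mul_inv_yfix, sqrt_inv by exact Hn0;
          field; apply Rgt_not_eq, sqrt_lt_R0, Hn0).
    split; apply Rmult_le_compat_l; lra.
  - replace (Finite (sqrt lam)) with (Rbar_mult (Rbar_minus (2 * sqrt lam) 0) (/ 2))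
      by (simpl; f_equal; field).
    apply is_lim_seq_scal_r, is_lim_seq_minus'; assumption.
  - replace (Finite (sqrt lam)) with (Rbar_mult (Rbar_plus (2 * sqrt lam) 0) (/ 2))
      by (simpl; f_equal; field).
    apply is_lim_seq_scal_r, is_lim_seq_plus'; assumption.
Qed.

Theorem lemma3 (lam : R) (Hlam : 0 < lam) :
  (forall Delta : nat, (1 <= Delta)%nat ->
     is_lim_seq (fun k => yseq lam (INR Delta) k)
                (2 / (1 + sqrt (1 + 4 * lam * INR Delta)))) /\
  exists L : nat -> R,
    (forall Delta : nat, (1 <= Delta)%nat ->
       filterlim (fun eps => hlow lam (INR Delta) eps / ln (/ eps))
                 (at_right 0) (locally (L Delta))) /\
    is_lim_seq (fun Delta => / sqrt (INR Delta) * L Delta) (sqrt lam).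
Proof.
  assert (Hpos : forall Delta : nat, (1 <= Delta)%nat -> 0 < lam * INR Delta).
  { intros Delta HDelta. apply Rmult_lt_0_compat; [exact Hlam | apply lt_0_INR; lia]. }
  split.
  - intros Delta HDelta. rewrite Rmult_assoc.
    exact (is_lim_yseq lam (INR Delta) (Hpos Delta HDelta)).
  - exists (fun Delta => / decay_rate (lam * INR Delta)). split.
    + intros Delta HDelta. exact (is_lim_hlow_div_ln lam (INR Delta) (Hpos Delta HDelta)).
    + exact (is_lim_inv_sqrt_mul_inv_decay_rate lam Hlam).
Qed.
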